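(* Every 5-crown is $(2P_3,C_4,C_6,C_7,\text{3-pentagon})$-free. Moreover, every 5-crown is anticonnected and contains no universal and no simplicial vertices.
   Context: Graphs are finite, simple, nonnull. A graph is $(H_1,\dots,H_m)$-free if it has no induced subgraph isomorphic to any $H_i$. $P_k$, $C_k$ are the path and cycle on $k$ vertices; $2P_3$ is two disjoint copies of $P_3$. The 3-pentagon is the graph on vertices $a,b_1,b_2,b_3,c_1,c_2,c_3$ where $a$ is adjacent to each $b_i$ and to no $c_i$, $\{b_1,b_2,b_3\}$ is stable, $\{c_1,c_2,c_3\}$ is a clique, and $b_ic_j$ is an edge iff $i=j$. A graph is anticonnected if its complement is connected. A vertex is simplicial if its neighbours form a (possibly empty) clique, universal if adjacent to all other vertices. A 5-ring is a graph $R$ whose vertex set partitions into nonempty sets $X_0,\dots,X_4$ (indices mod 5) such that each $X_i$ can be ordered $u^i_1,\dots,u^i_{|X_i|}$ with $X_i\subseteq N_R[u^i_{|X_i|}]\subseteq\dots\subseteq N_R[u^i_1]=X_{i-1}\cup X_i\cup X_{i+1}$ (closed neighbourhoods). A 5-crown is a 5-ring with such a partition $(X_0,\dots,X_4)$ for which there is $i^*\in\mathbb{Z}_5$ with $X_{i^*-1}$ complete to $X_{i^*-2}$ and $X_{i^*+1}$ complete to $X_{i^*+2}$ (a set $X$ is complete to $Y$ if every vertex of $X$ is adjacent to every vertex of $Y$). *)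

(* A simple graph is a symmetric irreflexive relation e on a finType T. *)
From mathcomp Require Import all_boot.
Set Implicit Arguments. Unset Strict Implicit. Unset Printing Implicit Defensive.

Section Graphs.
Variables (T : finType) (e : rel T).

Definition has_induced (k : nat) (h : rel 'I_k) : Prop :=
  exists f : 'I_k -> T, injective f /\ forall x y, e (f x) (f y) = h x y.

Definition induced_free (k : nat) (h : rel 'I_k) : Prop := ~ has_induced h.

Definition cnbhd (u : T) : {set T} := [set v | (v == u) || e u v].

Definition complement_rel : rel T := fun x y => (x != y) && ~~ e x y.

Definition anticonnected : Prop := forall x y : T, connect complement_rel x y.

Definition universal (v : T) : Prop := forall y, y != v -> e v y.

Definition simplicial (v : T) : Prop :=
  forall x y, x != y -> e v x -> e v y -> e x y.

Definition complete_to (A B : {set T}) : Prop :=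
  forall x y, x \in A -> y \in B -> e x y.

(* part v = index in Z_5 of the block containing v; X i = block of index i mod 5 *)
Definition block (part : T -> 'I_5) (i : nat) : {set T} :=
  [set v | nat_of_ord (part v) == i %% 5].

(* (X_0,...,X_4) given by part is a 5-ring partition; indices i-1 = i+4 mod 5 *)
Definition ring_partition (part : T -> 'I_5) : Prop :=
  forall i : nat, i < 5 ->
    exists (u : T) (s : seq T),
      [/\ uniq (u :: s),
          (forall x, (x \in u :: s) = (x \in block part i)),
          path (fun a b => cnbhd b \subset cnbhd a) u s,
          block part i \subset cnbhd (last u s) &
          cnbhd u = block part (i + 4) :|: block part i :|: block part (i + 1)].

Definition five_ring : Prop := exists part, ring_partition part.

Definition five_crown : Prop :=
  exists part, ring_partition part /\
    exists istar : nat, istar < 5 /\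
      complete_to (block part (istar + 4)) (block part (istar + 3)) /\
      complete_to (block part (istar + 1)) (block part (istar + 2)).

End Graphs.

Definition edges_rel (k : nat) (l : seq (nat * nat)) : rel 'I_k :=
  fun x y => ((nat_of_ord x, nat_of_ord y) \in l) || ((nat_of_ord y, nat_of_ord x) \in l).

Definition cycle_graph (n : nat) : rel 'I_n :=
  fun x y => (nat_of_ord y == (nat_of_ord x).+1 %% n) || (nat_of_ord x == (nat_of_ord y).+1 %% n).

Definition twoP3 : rel 'I_6 := edges_rel [:: (0,1); (1,2); (3,4); (4,5)].

(* 3-pentagon: a = 0, b_i = i (i=1,2,3), c_i = i+3 *)
Definition three_pentagon : rel 'I_7 :=
  edges_rel [:: (0,1); (0,2); (0,3); (4,5); (4,6); (5,6); (1,4); (2,5); (3,6)].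
Arguments cycle_graph n : clear implicits.

From mathcomp Require Import all_boot.
Set Implicit Arguments. Unset Strict Implicit. Unset Printing Implicit Defensive.

(* In a 5-ring, a vertex of X_i only sees X_(i-1), X_i and X_(i+1), each X_i is
   a clique whose closed neighbourhoods form a chain, and the first vertex of X_i
   sees all of X_(i-1) and X_(i+1).  This already gives anticonnectedness (any two
   blocks are linked through non-neighbouring blocks) and excludes universal
   vertices (X_(i+2) is missed) and simplicial ones (the first vertices of X_(i-1)
   and X_(i+1) are non-adjacent neighbours).  For a forbidden graph H, labelling
   the vertices of an induced copy of H by their blocks gives a map V(H) -> Z_5
   obeying these constraints and the two completeness conditions of the crown;
   an exhaustive search, pruned by the pairwise constraints, shows that no such
   labelling exists for 2P_3, C_4, C_6, C_7 and the 3-pentagon. *)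

Definition near (a b : nat) := [|| b == (a + 4) %% 5, b == a | b == (a + 1) %% 5].

Lemma near_refl a : near a a.
Proof. by rewrite /near eqxx orbT. Qed.

Lemma far_or_far_between a b : a < 5 -> b < 5 ->
  ~~ near a b \/ exists2 j, j < 5 & ~~ near a j && ~~ near j b.
Proof.
case: a => [|[|[|[|[|]]]]]; case: b => [|[|[|[|[|]]]]] //= _ _; try by left.
all: right; first [by exists 0 | by exists 1 | by exists 2 | by exists 3 | by exists 4].
Qed.

Lemma far_plus2 a : a < 5 -> ~~ near a ((a + 2) %% 5).
Proof. by case: a => [|[|[|[|[|]]]]]. Qed.

Lemma near_flanks a : a < 5 ->
  [/\ (a + 4) %% 5 != a, (a + 1) %% 5 != a, near ((a + 4) %% 5) a, near ((a + 1) %% 5) a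
    & ~~ near ((a + 4) %% 5) ((a + 1) %% 5)].
Proof. by case: a => [|[|[|[|[|]]]]]. Qed.

Lemma sorted_cnbhd_sub (T : finType) (e : rel T) (s : seq T) x y :
  sorted (fun a b => cnbhd e b \subset cnbhd e a) s -> x \in s -> y \in s ->
  index x s <= index y s -> cnbhd e y \subset cnbhd e x.
Proof.
move=> sorted_s; apply: (sorted_leq_index _ _ sorted_s) => [b a c ab bc | a].
- exact: subset_trans bc ab.
- exact: subxx.
Qed.

Section FiveRing.
Variables (T : finType) (e : rel T) (part : T -> 'I_5).
Hypothesis ring : ring_partition e part.
Local Notation P v := (nat_of_ord (part v)).
Local Notation X i := (block part i).

Lemma in_block_near a w : a < 5 ->
  (w \in X (a + 4) :|: X a :|: X (a + 1)) = near a (P w).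
Proof. by move=> lt_a5; rewrite !inE /near (modn_small lt_a5) -orbA. Qed.

Lemma ring_block_chain v : exists u s, [/\ uniq (u :: s), u :: s =i X (P v),
  sorted (fun a b => cnbhd e b \subset cnbhd e a) (u :: s),
  X (P v) \subset cnbhd e (last u s)
  & cnbhd e u = X (P v + 4) :|: X (P v) :|: X (P v + 1)].
Proof. by have [u [s [? ? ? ? ?]]] := ring (ltn_ord (part v)); exists u, s. Qed.

Lemma ring_cnbhd_sub v : cnbhd e v \subset X (P v + 4) :|: X (P v) :|: X (P v + 1).
Proof.
have [u [s [_ mem sorted_us _ <-]]] := ring_block_chain v.
have vs : v \in u :: s by rewrite mem inE modn_small.
by apply: (sorted_cnbhd_sub sorted_us); rewrite ?mem_head //= eqxx.
Qed.

Lemma ring_block_sub_cnbhd v : X (P v) \subset cnbhd e v.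
Proof.
have [u [s [uniq_us mem sorted_us sub_last _]]] := ring_block_chain v.
have vs : v \in u :: s by rewrite mem inE modn_small.
apply: subset_trans sub_last (sorted_cnbhd_sub sorted_us vs (mem_last u s) _).
by rewrite index_last // -ltnS index_mem.
Qed.

Lemma ring_cnbhd_nested v w : P v = P w ->
  (cnbhd e v \subset cnbhd e w) || (cnbhd e w \subset cnbhd e v).
Proof.
move=> Pvw; have [u [s [_ mem sorted_us _ _]]] := ring_block_chain v.
have vs : v \in u :: s by rewrite mem inE modn_small.
have ws : w \in u :: s by rewrite mem inE Pvw modn_small.
case: (leqP (index v (u :: s)) (index w (u :: s))) => [le_vw | /ltnW le_wv].
- by rewrite (sorted_cnbhd_sub sorted_us vs ws le_vw) orbT.
- by rewrite (sorted_cnbhd_sub sorted_us ws vs le_wv).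
Qed.

Lemma ring_dominant i : i < 5 ->
  exists2 u, P u = i & forall w, w != u -> near i (P w) -> e u w.
Proof.
move=> lt_i5; have [u [s [_ mem _ _ cnbhd_u]]] := ring lt_i5.
have : u \in X i by rewrite -mem mem_head.
rewrite inE modn_small // => /eqP Pu; exists u => // w w_ne_u near_w.
have : w \in cnbhd e u by rewrite cnbhd_u in_block_near.
by rewrite inE (negPf w_ne_u).
Qed.

Lemma ring_edge_near v w : e v w -> near (P v) (P w).
Proof.
move=> vw; rewrite -in_block_near //; apply: (subsetP (ring_cnbhd_sub v)).
by rewrite inE vw orbT.
Qed.

Lemma ring_block_edge v w : P v = P w -> v != w -> e v w.
Proof.
move=> Pvw v_ne_w; have : w \in cnbhd e v.
  by apply: (subsetP (ring_block_sub_cnbhd v)); rewrite inE Pvw modn_small.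
by rewrite inE eq_sym (negPf v_ne_w).
Qed.

Lemma far_complement x y : ~~ near (P x) (P y) -> complement_rel e x y.
Proof.
move=> far; apply/andP; split; last by apply: contra far; exact: ring_edge_near.
by apply: contraNneq far => ->; exact: near_refl.
Qed.

Lemma five_ring_anticonnected : anticonnected e.
Proof.
move=> x y.
have [far | [j lt_j5 /andP[far_xj far_jy]]] :=
  far_or_far_between (ltn_ord (part x)) (ltn_ord (part y)).
  by apply/connect1/far_complement.
have [z Pz _] := ring_dominant lt_j5.
by apply: (@connect_trans _ _ z); apply/connect1/far_complement; rewrite Pz.
Qed.

Lemma five_ring_no_universal v : ~ universal e v.
Proof.
move=> univ; have [z Pz _] := ring_dominant (ltn_pmod (P v + 2) (isT : 0 < 5)).
have far : ~~ near (P v) (P z) by rewrite Pz far_plus2.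
have z_ne_v : z != v by apply: contraNneq far => ->; exact: near_refl.
by rewrite (ring_edge_near (univ z z_ne_v)) in far.
Qed.

Hypothesis e_sym : symmetric e.

Lemma five_ring_no_simplicial v : ~ simplicial e v.
Proof.
move=> simp.
have [left_ne right_ne near_left near_right far_lr] := near_flanks (ltn_ord (part v)).
have [u1 Pu1 dom1] := ring_dominant (ltn_pmod (P v + 4) (isT : 0 < 5)).
have [u2 Pu2 dom2] := ring_dominant (ltn_pmod (P v + 1) (isT : 0 < 5)).
have v_ne_u1 : v != u1 by apply: contra_neq left_ne => v_u1; rewrite -Pu1 v_u1.
have v_ne_u2 : v != u2 by apply: contra_neq right_ne => v_u2; rewrite -Pu2 v_u2.
have u1_ne_u2 : u1 != u2.
  by apply: contraNneq far_lr => u12; rewrite -Pu1 -Pu2 u12 near_refl.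
have adj_vu1 : e v u1 by rewrite e_sym dom1.
have adj_vu2 : e v u2 by rewrite e_sym dom2.
have := ring_edge_near (simp u1 u2 u1_ne_u2 adj_vu1 adj_vu2).
by rewrite Pu1 Pu2 (negPf far_lr).
Qed.

End FiveRing.

Definition all_pairs (k : nat) (p : nat -> nat -> bool) :=
  all (fun x => all (fun y => (x != y) ==> p x y) (iota 0 k)) (iota 0 k).

Lemma all_pairsP k (p : nat -> nat -> bool) :
  reflect (forall x y, x < k -> y < k -> x != y -> p x y) (all_pairs k p).
Proof.
apply: (iffP allP) => [pairs x y lt_xk lt_yk ne_xy | pairs x].
  have /pairs/allP/(_ y) : x \in iota 0 k by rewrite mem_iota.
  by rewrite mem_iota ne_xy; apply.
rewrite mem_iota => /= lt_xk; apply/allP => y; rewrite mem_iota => /= lt_yk.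
by apply/implyP; apply: pairs.
Qed.

(* [l] gives the block of each vertex 0, ..., size l - 1 of an induced copy of
   [h]; [crown_labelling h l i] collects the constraints that ring_block_edge,
   ring_edge_near, ring_cnbhd_nested and the crown condition at [i] impose. *)
Section Labelling.
Variables (h : nat -> nat -> bool) (l : seq nat).
Local Notation lab x := (nth 0 l x).

Definition ring_pair x y :=
  ((lab x == lab y) ==> h x y) && (~~ near (lab x) (lab y) ==> ~~ h x y).

Definition private_nbr x y z := [&& z != x, z != y, h x z & ~~ h y z].

Definition nested_pair x y :=
  (lab x == lab y) ==> ~~ (has (private_nbr x y) (iota 0 (size l))
                           && has (private_nbr y x) (iota 0 (size l))).

Definition crown_pair i x y :=
  ((lab x == (i + 4) %% 5) && (lab y == (i + 3) %% 5) ==> h x y)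
  && ((lab x == (i + 1) %% 5) && (lab y == (i + 2) %% 5) ==> h x y).

Definition crown_labelling i :=
  [&& all (fun a => a < 5) l, all_pairs (size l) ring_pair,
      all_pairs (size l) nested_pair & all_pairs (size l) (crown_pair i)].

End Labelling.

Definition extends h (t : seq nat) a :=
  all (fun j => ring_pair h (rcons t a) j (size t)) (iota 0 (size t)).

Fixpoint labellings h k : seq (seq nat) :=
  if k is k'.+1 then
    [seq rcons t a | t <- labellings h k', a <- [seq a <- iota 0 5 | extends h t a]]
  else [:: [::]].

Definition no_crown_labelling h k :=
  all (fun l => ~~ has (crown_labelling h l) (iota 0 5)) (labellings h k).

Lemma labellings_complete h l : all (fun a => a < 5) l ->
  all_pairs (size l) (ring_pair h l) -> l \in labellings h (size l).
Proof.
elim/last_ind: l => [//|t a IH]; rewrite all_rcons size_rcons.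
move=> /andP[lt_a5 lt_t5] /all_pairsP ring_ta; apply: allpairs_f_dep.
- apply: IH => //; apply/all_pairsP => x y lt_xt lt_yt ne_xy.
  have := ring_ta x y (ltnW lt_xt) (ltnW lt_yt) ne_xy.
  by rewrite /ring_pair !nth_rcons lt_xt lt_yt.
- rewrite mem_filter mem_iota; apply/andP; split=> //.
  apply/allP => j; rewrite mem_iota => /= lt_jt.
  by apply: ring_ta => //; [exact: ltnW | rewrite ltn_eqF].
Qed.

Lemma no_crown_labelling_sound h k l i : no_crown_labelling h k -> size l = k -> i < 5 ->
  ~~ crown_labelling h l i.
Proof.
move=> /allP none size_l lt_i5; apply/negP => crown.
have /and4P[lt_l5 ring_l _ _] := crown.
have := labellings_complete lt_l5 ring_l; rewrite size_l => /none /negP; apply.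
by apply/hasP; exists i; rewrite ?mem_iota.
Qed.

Definition nat_cycle n a b := (b == a.+1 %% n) || (a == b.+1 %% n).
Definition nat_edges (s : seq (nat * nat)) a b := ((a, b) \in s) || ((b, a) \in s).

Lemma C4_no_crown_labelling : no_crown_labelling (nat_cycle 4) 4.
Proof. by vm_compute. Qed.

Lemma C6_no_crown_labelling : no_crown_labelling (nat_cycle 6) 6.
Proof. by vm_compute. Qed.

Lemma C7_no_crown_labelling : no_crown_labelling (nat_cycle 7) 7.
Proof. by vm_compute. Qed.

Lemma twoP3_no_crown_labelling :
  no_crown_labelling (nat_edges [:: (0, 1); (1, 2); (3, 4); (4, 5)]) 6.
Proof. by vm_compute. Qed.

Lemma three_pentagon_no_crown_labelling :
  no_crown_labelling
    (nat_edges [:: (0, 1); (0, 2); (0, 3); (4, 5); (4, 6); (5, 6); (1, 4); (2, 5); (3, 6)])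
    7.
Proof. by vm_compute. Qed.

Section InducedLabelling.
Variables (T : finType) (e : rel T) (part : T -> 'I_5) (istar : nat).
Hypotheses (ring : ring_partition e part)
  (crown_left : complete_to e (block part (istar + 4)) (block part (istar + 3)))
  (crown_right : complete_to e (block part (istar + 1)) (block part (istar + 2))).
Variables (n : nat) (h : nat -> nat -> bool) (f : 'I_n.+1 -> T).
Hypotheses (f_inj : injective f) (f_induced : forall x y : 'I_n.+1, e (f x) (f y) = h x y).
Local Notation P v := (nat_of_ord (part v)).

Let g j := f (inord j).
Let l := [seq P (g j) | j <- iota 0 n.+1].

Lemma size_labelling : size l = n.+1.
Proof. by rewrite size_map size_iota. Qed.

Lemma nth_labelling j : j < n.+1 -> nth 0 l j = P (g j).
Proof. by move=> lt_jn; rewrite (nth_map 0) ?size_iota // nth_iota. Qed.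

Lemma g_induced x y : x < n.+1 -> y < n.+1 -> h x y = e (g x) (g y).
Proof. by move=> lt_xn lt_yn; rewrite f_induced !inordK. Qed.

Lemma g_eq x y : x < n.+1 -> y < n.+1 -> (g x == g y) = (x == y).
Proof. by move=> lt_xn lt_yn; rewrite (inj_eq f_inj) -val_eqE /= !inordK. Qed.

Lemma no_private_nbr x y : x < n.+1 -> y < n.+1 ->
  cnbhd e (g x) \subset cnbhd e (g y) -> ~~ has (private_nbr h x y) (iota 0 n.+1).
Proof.
move=> lt_xn lt_yn sub; apply/hasPn => z; rewrite mem_iota => /= lt_zn.
apply/negP => /and4P[_ ne_zy xz not_yz].
have : g z \in cnbhd e (g y) by apply: (subsetP sub); rewrite inE -g_induced ?xz ?orbT.
by rewrite inE g_eq // (negPf ne_zy) -g_induced // (negPf not_yz).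
Qed.

Lemma induced_crown_labelling : crown_labelling h l istar.
Proof.
rewrite /crown_labelling size_labelling; apply/and4P; split.
- by apply/allP => _ /mapP[j _ ->].
- apply/all_pairsP => x y lt_xn lt_yn ne_xy.
  rewrite /ring_pair !nth_labelling // g_induced //; apply/andP; split; apply/implyP.
    by move/eqP/(ring_block_edge ring); apply; rewrite g_eq.
  by apply: contra; exact: ring_edge_near.
- apply/all_pairsP => x y lt_xn lt_yn _.
  rewrite /nested_pair size_labelling !nth_labelling //; apply/implyP => /eqP same.
  by case/orP: (ring_cnbhd_nested ring same) => sub;
    rewrite (negPf (no_private_nbr _ _ sub)) ?andbF.
- apply/all_pairsP => x y lt_xn lt_yn _.
  rewrite /crown_pair !nth_labelling // g_induced //.
  apply/andP; split; apply/implyP => /andP[x_in y_in].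
  + by apply: crown_left; rewrite inE.
  + by apply: crown_right; rewrite inE.
Qed.

End InducedLabelling.

Lemma five_crown_induced_free (T : finType) (e : rel T) n (hI : rel 'I_n.+1)
    (h : nat -> nat -> bool) :
  five_crown e -> no_crown_labelling h n.+1 -> (forall x y, hI x y = h x y) ->
  induced_free e hI.
Proof.
move=> [part [ring [i [lt_i5 [crown_left crown_right]]]]] none hIh [f [f_inj f_hI]].
have f_induced x y : e (f x) (f y) = h x y by rewrite f_hI hIh.
have := no_crown_labelling_sound none (size_labelling part f) lt_i5.
by rewrite (induced_crown_labelling ring crown_left crown_right f_inj f_induced).
Qed.

Theorem proposition6p7 (T : finType) (e : rel T) :
  symmetric e -> irreflexive e -> five_crown e ->
  (induced_free e twoP3 /\
   induced_free e (cycle_graph 4) /\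
   induced_free e (cycle_graph 6) /\
   induced_free e (cycle_graph 7) /\
   induced_free e three_pentagon) /\
  anticonnected e /\
  (forall v : T, ~ universal e v) /\
  (forall v : T, ~ simplicial e v).
Proof.
move=> e_sym _ crown; have [part [ring _]] := crown.
have free := five_crown_induced_free crown.
split; first do !split.
- exact: free twoP3_no_crown_labelling (fun _ _ => erefl).
- exact: free C4_no_crown_labelling (fun _ _ => erefl).
- exact: free C6_no_crown_labelling (fun _ _ => erefl).
- exact: free C7_no_crown_labelling (fun _ _ => erefl).
- exact: free three_pentagon_no_crown_labelling (fun _ _ => erefl).
split; first exact: five_ring_anticonnected ring.
split=> v; first exact: (five_ring_no_universal ring (v := v)).
exact: (five_ring_no_simplicial ring e_sym (v := v)).
Qed.
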